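(* Let $G$ be a networked timed DES and let $\tilde{G}$ be its communication automaton, as defined in the context. Then $\psi(\mathcal{L}(\tilde{G}))=\mathcal{L}(G)$.
   Context: A timed automaton is $G=(Q,\tilde{\Sigma},\delta,\Gamma,q_0,Q_m)$ with finite state set $Q$, finite event set $\tilde{\Sigma}=\Sigma\cup\{tick\}$ ($tick$ denotes the elapse of one unit of time), partial transition function $\delta:Q\times\tilde{\Sigma}\to Q$ (extended to strings in the usual way), active event function $\Gamma$, initial state $q_0$ and marked states $Q_m$; $\mathcal{L}(G)=\{s:\delta(q_0,s)\text{ is defined}\}$, $\mathcal{L}_m(G)=\{s:\delta(q_0,s)\in Q_m\}$. Standing assumptions: there is a set $\Sigma_{for}\subseteq\Sigma$ of enforceable events; for all $q$ and all nonempty $s\in\Sigma^*$, $\delta(q,s)\neq q$; every state has at least one defined transition; and for every $s\in\mathcal{L}(G)$ with $s\,tick\notin\mathcal{L}(G)$ there is $\sigma\in\Sigma_{for}$ with $s\sigma\in\mathcal{L}(G)$. The system is $G=G_1\|\cdots\|G_n$ (parallel composition) where $G_i$ has event set $\tilde{\Sigma}_i$ and $\tilde{\Sigma}_i\cap\tilde{\Sigma}_j=\{tick\}$ for $i\neq j$; $\mathcal{A}=\{1,\dots,n\}$ indexes supervisors, supervisor $i$ having observable events $\tilde{\Sigma}_{o,i}\subseteq\tilde{\Sigma}_i$. Communication: a Boolean matrix $\mathbf{COM}\in\{0,1\}^{n\times n}$ with $\mathbf{COM}_{ii}=0$. For each $(i,j)$ with $\mathbf{COM}_{ij}=1$ there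 is a channel $\mathbf{CH}_{ij}$ from supervisor $i$ to supervisor $j$, a set $\Sigma_{ij}\subseteq\tilde{\Sigma}_{o,i}\setminus\{tick\}$ of events communicated from $i$ to $j$, a subset $\Sigma_{L,ij}\subseteq\Sigma_{ij}$ of events that may be lost, and a delay bound $N_{ij}\in\mathbb{N}$ (in $tick$s); channels are FIFO. For $\mathbf{COM}_{ij}=0$ put $\Sigma_{ij}=\emptyset$. A configuration of $\mathbf{CH}_{ij}$ is a finite sequence $\theta_{ij}=(\sigma_1,n_1)\cdots(\sigma_k,n_k)$ with $\sigma_d\in\Sigma_{ij}$, $n_d\in\{0,\dots,N_{ij}\}$ (number of $tick$s since $\sigma_d$ entered the channel); $\theta_{ij}=\varepsilon$ whenever $\mathbf{COM}_{ij}=0$. A channel state is the tuple $\bar\theta=(\theta_{ij})_{i,j\in\mathcal{A}}$. Let $\mathbf{MAX}(\theta_{ij})=n_1$ if $\theta_{ij}\neq\varepsilon$ and $0$ otherwise; $\varepsilon^+=\varepsilon$ and $((\sigma_1,n_1)\cdots(\sigma_k,n_k))^+=(\sigma_1,n_1+1)\cdots(\sigma_k,n_k+1)$. Operators: $\mathbf{TIME}(\bar\theta)=(\theta_{ij}^+)_{i,j}$, defined iff $\mathbf{MAX}(\theta_{ij}^+)\le N_{ij}$ for all $i,j$; for $\sigma\in\Sigma$, $\mathbf{IN}(\bar\theta,\sigma)$ replaces $\theta_{ij}$ by $\theta_{ij}(\sigma,0)$ for every $(i,j)$ with $\sigma\in\Sigma_{ij}$ and leaves the other components unchanged; for $\sigma\in\Sigma_{ij}$,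 $\mathbf{OUT}_{ij}(\bar\theta,\sigma)$ is defined iff $\theta_{ij}=(\sigma_1,n_1)\cdots(\sigma_k,n_k)\neq\varepsilon$ with $\sigma_1=\sigma$, and then removes $(\sigma_1,n_1)$ from $\theta_{ij}$; for $d\in\mathbb{N}$, $\mathbf{LOSS}_{ij}(\bar\theta,d)$ is defined iff $\theta_{ij}=(\sigma_1,n_1)\cdots(\sigma_k,n_k)\neq\varepsilon$, $d\le k$ and $\sigma_d\in\Sigma_{L,ij}$, and then removes the $d$th pair from $\theta_{ij}$. Fresh events: $f_{ij}(\sigma)$ for $\sigma\in\Sigma_{ij}$ (the first event $\sigma$ in $\mathbf{CH}_{ij}$ is delivered), forming $\Sigma^f$, and $g_{ij}(d)$ for $d\in\mathbb{N}$ (the $d$th event in $\mathbf{CH}_{ij}$ is lost), forming $\Sigma^g$; $f_{ij},g_{ij}$ are injective with pairwise disjoint images. The communication automaton $\tilde{G}$ is the accessible part of the automaton with states $(q,\bar\theta)$, event set $\tilde{E}\subseteq\tilde{\Sigma}\cup\Sigma^f\cup\Sigma^g$, initial state $(q_0,(\varepsilon)_{i,j})$, marked states $\{(q,\bar\theta):q\in Q_m\}$, and transition function $\tilde\delta$: $\tilde\delta((q,\bar\theta),tick)=(\delta(q,tick),\mathbf{TIME}(\bar\theta))$ if both are defined; $\tilde\delta((q,\bar\theta),\sigma)=(\delta(q,\sigma),\mathbf{IN}(\bar\theta,\sigma))$ for $\sigma\in\Sigma$ if $\delta(q,\sigma)$ is defined; $\tilde\delta((q,\bar\theta),f_{ij}(\sigma))=(q,\mathbf{OUT}_{ij}(\bar\theta,\sigma))$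 if defined; $\tilde\delta((q,\bar\theta),g_{ij}(d))=(q,\mathbf{LOSS}_{ij}(\bar\theta,d))$ if defined; undefined otherwise. For a string $\mu$ over $\tilde E$, $\psi(\mu)$ is obtained by deleting all events of $\Sigma^f\cup\Sigma^g$; $\psi(L)=\{\psi(\mu):\mu\in L\}$. *)

From mathcomp Require Import all_boot.
Set Implicit Arguments.
Unset Strict Implicit.
Unset Printing Implicit Defensive.

Inductive tev (E : Type) : Type := Tick | Ev of E.
Arguments Tick {E}.
Arguments Ev {E} _.

Fixpoint dstar (Q Ev : Type) (d : Q -> Ev -> option Q) (q : Q) (s : seq Ev)
  : option Q :=
  match s with
  | [::] => Some q
  | a :: s' => match d q a with Some q' => dstar d q' s' | None => None end
  end.

Definition lang (Q Ev : Type) (d : Q -> Ev -> option Q) (q0 : Q) (s : seq Ev)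
  : Prop := dstar d q0 s <> None.

Definition reachable (Q Ev : Type) (d : Q -> Ev -> option Q) (q0 : Q) (q : Q)
  : Prop := exists s, dstar d q0 s = Some q.

Definition standing_assumptions (Q E : Type) (d : Q -> tev E -> option Q)
  (q0 : Q) (Sfor : E -> Prop) : Prop :=
  (forall q, reachable d q0 q ->
     forall s : seq E, s <> [::] -> dstar d q (map Ev s) <> Some q) /\
  (forall q, reachable d q0 q -> exists a, d q a <> None) /\
  (forall s, lang d q0 s -> ~ lang d q0 (rcons s Tick) ->
     exists e, Sfor e /\ lang d q0 (rcons s (Ev e))).

(* Parallel composition G_1 || ... || G_n of components with pairwise disjoint
   event sets Sigma_i = { e | owner e = i } (tick shared by all). *)
Definition par_delta (n : nat) (E : Type) (owner : E -> 'I_n)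
  (Q : 'I_n -> Type) (d : forall i, Q i -> tev E -> option (Q i))
  (q : forall i, Q i) (a : tev E) : option (forall i, Q i) :=
  match a with
  | Tick =>
      if [forall i, isSome (d i (q i) Tick)]
      then Some (fun i => odflt (q i) (d i (q i) Tick)) else None
  | Ev e =>
      match d (owner e) (q (owner e)) (Ev e) with
      | Some q' => Some (dfwith q q')
      | None => None
      end
  end.

Section Channels.
Variables (n : nat) (E : finType).
Variables (Sig SigL : 'I_n -> 'I_n -> {set E}) (N : 'I_n -> 'I_n -> nat).

Definition chanconf := seq (E * nat).
Definition chanstate := 'I_n -> 'I_n -> chanconf.

Definition chan_empty : chanstate := fun _ _ => [::].

Definition incr (th : chanconf) : chanconf := map (fun p => (p.1, p.2.+1)) th.

Definition MAX (th : chanconf) : nat := if th is p :: _ then p.2 else 0.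

Definition TIME (th : chanstate) : option chanstate :=
  if [forall i, forall j, MAX (incr (th i j)) <= N i j]
  then Some (fun i j => incr (th i j)) else None.

Definition IN (th : chanstate) (e : E) : chanstate :=
  fun i j => if e \in Sig i j then rcons (th i j) (e, 0) else th i j.

Definition upd (th : chanstate) (i j : 'I_n) (c : chanconf) : chanstate :=
  fun i' j' => if (i' == i) && (j' == j) then c else th i' j'.

Definition OUT (i j : 'I_n) (th : chanstate) (e : E) : option chanstate :=
  match th i j with
  | (e', _) :: rest => if e' == e then Some (upd th i j rest) else None
  | [::] => None
  end.

(* LOSS_ij(theta, d): defined iff 1 <= d <= k and sigma_d in Sigma_L,ij;
   removes the d-th pair (pairs are numbered from 1). *)
Definition LOSS (i j : 'I_n) (th : chanstate) (d : nat) : option chanstate :=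
  match onth (th i j) d.-1 with
  | Some (e, _) =>
      if (0 < d) && (e \in SigL i j)
      then Some (upd th i j (take d.-1 (th i j) ++ drop d (th i j)))
      else None
  | None => None
  end.

(* Events of the communication automaton: the original timed events, the
   delivery events f_ij(sigma) and the loss events g_ij(d). *)
Inductive cev : Type :=
  | Base of tev E
  | Fdel of 'I_n & 'I_n & E
  | Gloss of 'I_n & 'I_n & nat.

Definition ctrans (Q : Type) (d : Q -> tev E -> option Q)
  (x : Q * chanstate) (c : cev) : option (Q * chanstate) :=
  match c with
  | Base Tick =>
      match d x.1 Tick, TIME x.2 with
      | Some q, Some th => Some (q, th)
      | _, _ => None
      end
  | Base (Ev e) =>
      match d x.1 (Ev e) with Some q => Some (q, IN x.2 e) | None => None end
  | Fdel i j e =>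
      if e \in Sig i j then
        match OUT i j x.2 e with Some th => Some (x.1, th) | None => None end
      else None
  | Gloss i j k =>
      match LOSS i j x.2 k with Some th => Some (x.1, th) | None => None end
  end.

Definition psi (mu : seq cev) : seq (tev E) :=
  pmap (fun c => if c is Base a then Some a else None) mu.

End Channels.

From mathcomp Require Import all_boot.

Set Implicit Arguments.
Unset Strict Implicit.
Unset Printing Implicit Defensive.

(* Erasing delivery and loss events maps every run of the communication
   automaton to a run of G, since those events leave the plant state alone.
   Conversely, a run of G is lifted by delivering every event to all of its
   recipients immediately after it occurs: the channels are then empty at
   every tick, so TIME is always defined.  Neither the standing assumptions nor
   the communication structure play any role. *)

Lemma dstar_cat (S A : Type) (f : S -> A -> option S) x l1 l2 :
  dstar f x (l1 ++ l2) = obind (dstar f ^~ l2) (dstar f x l1).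
Proof. by elim: l1 x => [|a l IH] x //=; case: (f x a). Qed.

Section CommunicationAutomaton.
Variables (n : nat) (E : finType).
Variables (Sig SigL : 'I_n -> 'I_n -> {set E}) (N : 'I_n -> 'I_n -> nat).
Variables (Q : Type) (d : Q -> tev E -> option Q).

Notation ctrans := (ctrans Sig SigL N d).

Lemma dstar_psi mu x y :
  dstar ctrans x mu = Some y -> dstar d x.1 (psi mu) = Some y.1.
Proof.
elim: mu x => [|c mu IH] [q th] /=; first by case=> <-.
case: c => [[|e]|i j e|i j k] /=.
- by case: (d q Tick) (TIME N th) => [q1|] // [th1|] // /IH.
- by case: (d q (Ev e)) => [q1|] // /IH.
- by case: (e \in Sig i j) (OUT i j th e) => // [[th1|]] // /IH.
- by case: (LOSS SigL i j th k) => [th1|] // /IH.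
Qed.

Lemma lang_psi x mu : lang ctrans x mu -> lang d x.1 (psi mu).
Proof.
by rewrite /lang; case run: (dstar _ x mu) => [y|] // _; rewrite (dstar_psi run).
Qed.

Definition chans_empty (th : chanstate n E) : Prop := forall i j, th i j = [::].

Lemma TIME_empty th :
  chans_empty th -> exists2 th', TIME N th = Some th' & chans_empty th'.
Proof.
move=> th0; rewrite /TIME.
have -> : [forall i, forall j, MAX (incr (th i j)) <= N i j].
  by apply/forallP => i; apply/forallP => j; rewrite th0.
by exists (fun i j => incr (th i j)) => // i j; rewrite th0.
Qed.

Definition recipients (e : E) : seq ('I_n * 'I_n) :=
  enum [pred ij : 'I_n * 'I_n | e \in Sig ij.1 ij.2].

Definition deliveries (e : E) : seq (cev n E) :=
  [seq Fdel ij.1 ij.2 e | ij <- recipients e].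

Lemma psi_cat (mu1 mu2 : seq (cev n E)) : psi (mu1 ++ mu2) = psi mu1 ++ psi mu2.
Proof. exact: pmap_cat. Qed.

Lemma psi_deliveries e : psi (deliveries e) = [::].
Proof. by rewrite /deliveries; elim: (recipients e). Qed.

Lemma dstar_deliver q e (l : seq ('I_n * 'I_n)) th :
  uniq l -> {in l, forall ij, e \in Sig ij.1 ij.2} ->
  (forall i j, th i j = if (i, j) \in l then [:: (e, 0)] else [::]) ->
  exists2 th', dstar ctrans (q, th) [seq Fdel ij.1 ij.2 e | ij <- l]
                 = Some (q, th') & chans_empty th'.
Proof.
elim: l th => [|[i j] l IH] th /=; first by exists th.
move=> /andP [ijNl l_uniq] l_sig thE.
rewrite (l_sig (i, j)) ?mem_head // /OUT thE mem_head eqxx.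
apply: IH => // [ij lij|i' j']; first by rewrite l_sig // inE lij orbT.
rewrite /upd thE inE xpair_eqE.
by case: andP => // [[/eqP -> /eqP ->]]; rewrite (negbTE ijNl).
Qed.

Lemma dstar_send_deliver q q' th e :
  chans_empty th -> d q (Ev e) = Some q' ->
  exists2 th', dstar ctrans (q, th) (Base n (Ev e) :: deliveries e)
                 = Some (q', th') & chans_empty th'.
Proof.
move=> th0 dqe /=; rewrite dqe.
apply: dstar_deliver; first exact: enum_uniq.
  by move=> ij; rewrite mem_enum.
by move=> i j; rewrite /IN th0 mem_enum.
Qed.

Lemma lang_lift q th s :
  chans_empty th -> lang d q s -> exists mu, lang ctrans (q, th) mu /\ psi mu = s.
Proof.
elim: s q th => [|a s IH] q th th0; first by exists [::].
rewrite /lang /=; case dqa: (d q a) => [q1|] // /IH IHs.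
case: a dqa => [|e] dqa.
- have [th1 TIMEth th10] := TIME_empty th0.
  have [mu [run <-]] := IHs _ th10.
  by exists (Base n Tick :: mu); rewrite /lang /= dqa TIMEth.
- have [th1 send th10] := dstar_send_deliver th0 dqa.
  have [mu [run <-]] := IHs _ th10.
  exists (Base n (Ev e) :: deliveries e ++ mu); split.
    by rewrite /lang -cat_cons dstar_cat send.
  by rewrite /= psi_cat psi_deliveries.
Qed.

End CommunicationAutomaton.

Theorem proposition1
  (n : nat) (E : finType)
  (* Sigma = E; Sigma_i = { e | owner e = i }: pairwise disjoint, union Sigma *)
  (owner : E -> 'I_n)
  (* components G_i *)
  (Q : 'I_n -> finType) (q0 : forall i, Q i)
  (d : forall i, Q i -> tev E -> option (Q i))
  (* enforceable events, observable events *)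
  (Sfor : {set E}) (obs : 'I_n -> pred (tev E))
  (* communication structure *)
  (COM : 'I_n -> 'I_n -> bool) (Sig SigL : 'I_n -> 'I_n -> {set E})
  (N : 'I_n -> 'I_n -> nat)
  (HG : standing_assumptions (par_delta owner d) q0 (fun e => e \in Sfor))
  (Hobs : forall i a, obs i a -> a = Tick \/ exists e, a = Ev e /\ owner e = i)
  (HCOM : forall i, COM i i = false)
  (HSig0 : forall i j, COM i j = false -> Sig i j = set0)
  (HSigobs : forall i j e, e \in Sig i j -> obs i (Ev e))
  (HSigL : forall i j, SigL i j \subset Sig i j) :
  forall s : seq (tev E),
    (exists mu, lang (ctrans Sig SigL N (par_delta owner d)) (q0, @chan_empty n E) mu
                /\ psi mu = s)
    <-> lang (par_delta owner d) q0 s.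
Proof.
move=> s; split; first by case=> mu [/lang_psi run <-].
exact: lang_lift.
Qed.
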